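(* Let $(\Omega,\mathcal A)$ be a measurable space and let $K$ be a random compact set in $\mathbb C^n$. Then the functions $(\omega,z)\mapsto\Phi_{K(\omega)}(z)$ and $(\omega,z)\mapsto V_{K(\omega)}(z)=\log\Phi_{K(\omega)}(z)$ are random functions with values in $\mathbb R\cup\{\infty\}$, i.e. for each $z\in\mathbb C^n$ the maps $\omega\mapsto\Phi_{K(\omega)}(z)$ and $\omega\mapsto V_{K(\omega)}(z)$ are measurable.
   Context: A random compact set is a measurable map from $\Omega$ to the space of non-empty compact subsets of $\mathbb C^n$ with the Hausdorff distance and its Borel $\sigma$-algebra. For non-empty compact $E\subset\mathbb C^n$, the Siciak extremal function is $\Phi_E(z)=\sup\{|p(z)|^{1/\deg p}: p \text{ polynomial on } \mathbb C^n,\ \|p\|_E\le1,\ \deg p\ge1\}$, where $\|p\|_E=\max_E|p|$, and the pluricomplex Green function is $V_E=\log\Phi_E$. *)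

From HB Require Import structures.
From mathcomp Require Import all_boot all_order all_algebra.
From mathcomp Require Import all_classical all_reals all_analysis measurable_realfun.
From mathcomp Require complex mpoly.
Import complex.ComplexField.

Set Implicit Arguments.
Unset Strict Implicit.
Unset Printing Implicit Defensive.

Import Order.TTheory GRing.Theory Num.Theory.
Import numFieldNormedType.Exports.

Local Open Scope classical_set_scope.
Local Open Scope ring_scope.

(* A point of C^n is given by its real part x and imaginary part y,
   z = x + i y, with x, y in R^n; C^n carries the (product) topology of
   R^n x R^n = R^{2n}. *)
Definition Cn (R : realType) (n : nat) := ('rV[R]_n * 'rV[R]_n)%type.

Definition coordC (R : realType) (n : nat) (z : Cn R n) (j : 'I_n)
  : complex.complex R := complex.Complex (z.1 ord0 j) (z.2 ord0 j).

Definition distC (R : realType) (n : nat) (z w : Cn R n) : R :=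
  Num.sqrt (\sum_(j < n) ((z.1 ord0 j - w.1 ord0 j) ^+ 2
                          + (z.2 ord0 j - w.2 ord0 j) ^+ 2)).

Definition ncompact (R : realType) (n : nat) :=
  {A : set (Cn R n) | A !=set0 /\ compact A}.

Definition dist_pt_set (R : realType) (n : nat) (z : Cn R n)
  (B : set (Cn R n)) : R := inf [set distC z b | b in B].

Definition hausdorff (R : realType) (n : nat) (A B : ncompact R n) : R :=
  Num.max (sup [set dist_pt_set a (proj1_sig B) | a in proj1_sig A])
          (sup [set dist_pt_set b (proj1_sig A) | b in proj1_sig B]).

Definition hausdorff_open (R : realType) (n : nat) (U : set (ncompact R n))
  : Prop :=
  forall A, U A -> exists2 e : R, 0 < e &
    forall B, hausdorff A B < e -> U B.

Definition hausdorff_borel (R : realType) (n : nat) : set (set (ncompact R n)) :=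
  <<s hausdorff_open (n:=n) >>.

Definition random_compact (d : measure_display) (Omega : measurableType d)
  (R : realType) (n : nat) (K : Omega -> ncompact R n) : Prop :=
  forall B, hausdorff_borel B -> measurable (K @^-1` B).

Definition polyC (R : realType) (n : nat) :=
  mpoly.mpoly n (complex.complex R).

Definition poly_eval (R : realType) (n : nat) (p : polyC R n) (z : Cn R n)
  : complex.complex R := mpoly.meval (coordC z) p.

(* total degree: max of the degrees of the monomials in the support (0 for p = 0) *)
Definition poly_deg (R : realType) (n : nat) (p : polyC R n) : nat :=
  (\max_(m <- mpoly.msupp p) mpoly.mdeg m)%N.

Definition modC (R : realType) (x : complex.complex R) : R :=
  complex.ComplexField.Normc.normc x.

Definition sup_norm_le1 (R : realType) (n : nat) (p : polyC R n)
  (E : set (Cn R n)) : Prop :=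
  forall w, E w -> modC (poly_eval p w) <= 1.

Definition siciak (R : realType) (n : nat) (E : set (Cn R n)) (z : Cn R n)
  : \bar R :=
  ereal_sup [set ((modC (poly_eval p z)) `^ ((poly_deg p)%:R^-1))%:E
             | p in [set p : polyC R n | (1 <= poly_deg p)%N /\ sup_norm_le1 p E]].

(* pluricomplex Green function V_E = log Phi_E (log 0 = -oo, log +oo = +oo) *)
Definition green (R : realType) (n : nat) (E : set (Cn R n)) (z : Cn R n)
  : \bar R := lne (siciak E z).

From Pilot Require Import Defs.
From HB Require Import structures.
From mathcomp Require Import all_boot all_order all_algebra.
From mathcomp Require Import all_classical all_reals all_analysis measurable_realfun.
From mathcomp Require Import complex ring lra.
From mathcomp Require mpoly.
Import (canonicals) mpoly.
Import Order.TTheory GRing.Theory Num.Theory.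
Import numFieldNormedType.Exports.
Import ComplexField.

(* For fixed z, E |-> Phi_E(z) is lower semicontinuous for the Hausdorff
   metric.  If p has degree d, |p| <= 1 on E and |p(z)|^(1/d) > a, choose
   mu < 1 with mu |p(z)|^(1/d) > a.  Polynomials are Lipschitz on bounded
   sets, so |p| <= mu^-d on a neighbourhood of the compact E, hence on every
   F close enough to E; then mu^d p is a competitor for F whose value at z
   exceeds a.  So the superlevel sets {Phi(z) > a} are Hausdorff-open, their
   preimages under K are measurable, and the rays ]a, +oo] generate the Borel
   sets of the extended reals.  Since {V(z) > a} = {Phi(z) > e^a}, the same
   holds for V. *)

Local Open Scope classical_set_scope.
Local Open Scope ring_scope.

Lemma mx_entry_norm_le {R : realType} {m k : nat} (x : 'M[R]_(m, k)) i j :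
  `|x i j| <= `|x|.
Proof.
rewrite [leRHS]/Num.norm /= mx_normrE.
exact: (le_bigmax _ (fun ij : 'I_m * 'I_k => `|x ij.1 ij.2|) (i, j)).
Qed.

Lemma compact_coord_bounded {R : realType} {n : nat} {A : set (Cn R n)} :
  compact A -> exists M : R, 0 <= M /\ forall x, A x -> forall j,
    `|x.1 ord0 j| <= M /\ `|x.2 ord0 j| <= M.
Proof.
move=> /compact_bounded[M [Mreal AM]].
have M1 : M < `|M| + 1 by rewrite (le_lt_trans (real_ler_norm Mreal)) ?ltrDl.
exists (`|M| + 1); split => [|x Ax j]; first by rewrite addr_ge0.
have /= := AM _ M1 x Ax; rewrite prod_normE ge_max => /andP[x1 x2].
by split; [exact: le_trans (mx_entry_norm_le _ ord0 j) x1
         | exact: le_trans (mx_entry_norm_le _ ord0 j) x2].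
Qed.

Section ComplexModulus.
Context {R : realType}.
Implicit Types (x y : complex R) (a b : R).

Lemma normc_modC x : `|x| = ((modC x)%:C)%C.
Proof. by case: x => a b; rewrite normc_def. Qed.

Lemma modC_ge0 x : 0 <= modC x.
Proof. by case: x => a b; exact: sqrtr_ge0. Qed.

Lemma modC0 : modC 0 = 0 :> R.
Proof. exact: Normc.normc0. Qed.

Lemma modC_realC a : modC (a%:C)%C = `|a|.
Proof. by rewrite /modC /= expr0n /= addr0 sqrtr_sqr. Qed.

Lemma ler_modCD x y : modC (x + y) <= modC x + modC y.
Proof. by rewrite -lecR rmorphD /= -!normc_modC ler_normD. Qed.

Lemma modCM x y : modC (x * y) = modC x * modC y.
Proof. exact: Normc.normcM. Qed.

Lemma modC_Complex a b : modC (Complex a b) = Num.sqrt (a ^+ 2 + b ^+ 2).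
Proof. by []. Qed.

Lemma modC_Complex_le a b : modC (Complex a b) <= `|a| + `|b|.
Proof.
rewrite modC_Complex -(@ger0_norm _ (`|a| + `|b|)) ?addr_ge0 //.
rewrite -sqrtr_sqr ler_sqrt ?exprn_ge0 ?addr_ge0 ?sqr_ge0 //.
rewrite sqrrD !real_normK ?num_real //.
by have := mulr_ge0 (normr_ge0 a) (normr_ge0 b); lra.
Qed.

End ComplexModulus.

Section PolynomialLipschitz.
Context {R : realType} {n : nat}.
Local Notation C := (complex R).
Implicit Types (w e : Cn R n) (f g : Cn R n -> C).

Lemma distC_ge0 w e : 0 <= distC w e.
Proof. exact: sqrtr_ge0. Qed.

Lemma modC_coordCB_le w e j : modC (coordC w j - coordC e j) <= distC w e.
Proof.
rewrite /coordC /distC modC_Complex ler_sqrt; last first.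
  by apply: sumr_ge0 => i _; rewrite addr_ge0 ?sqr_ge0.
rewrite (bigD1 j) //= lerDl.
by apply: sumr_ge0 => i _; rewrite addr_ge0 ?sqr_ge0.
Qed.

Definition coord_bounded (r : R) w := forall j, modC (coordC w j) <= r.

Definition lipschitz_on_bounded f := forall r : R, exists L M : R,
  [/\ 0 <= L, 0 <= M & forall w e, coord_bounded r w -> coord_bounded r e ->
     modC (f w) <= M /\ modC (f w - f e) <= L * distC w e].

Lemma eq_lipschitz_on_bounded {f g} :
  lipschitz_on_bounded f -> f =1 g -> lipschitz_on_bounded g.
Proof.
move=> Hf fg r; have [L [M [L0 M0 H]]] := Hf r.
by exists L, M; split => // w e rw re; rewrite -!fg; exact: H.
Qed.

Lemma lipschitz_on_bounded_cst (c : C) : lipschitz_on_bounded (fun=> c).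
Proof.
move=> r; exists 0, (modC c); split => // [|w e _ _]; first exact: modC_ge0.
by rewrite subrr modC0 mul0r.
Qed.

Lemma lipschitz_on_bounded_coordC j : lipschitz_on_bounded (fun w => coordC w j).
Proof.
move=> r; exists 1, (Num.max r 0); split; rewrite ?le_max ?lexx ?orbT //.
move=> w e rw _; split; first by rewrite le_max rw.
by rewrite mul1r modC_coordCB_le.
Qed.

Lemma lipschitz_on_boundedD {f g} : lipschitz_on_bounded f ->
  lipschitz_on_bounded g -> lipschitz_on_bounded (fun w => f w + g w).
Proof.
move=> Hf Hg r; have [L1 [M1 [L10 M10 H1]]] := Hf r.
have [L2 [M2 [L20 M20 H2]]] := Hg r.
exists (L1 + L2), (M1 + M2); split; rewrite ?addr_ge0 //.
move=> w e rw re; have [f1 f1'] := H1 w e rw re; have [g1 g1'] := H2 w e rw re.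
split; first exact: le_trans (ler_modCD _ _) (lerD f1 g1).
have -> : f w + g w - (f e + g e) = (f w - f e) + (g w - g e) by ring.
by rewrite mulrDl; exact: le_trans (ler_modCD _ _) (lerD f1' g1').
Qed.

Lemma lipschitz_on_boundedM {f g} : lipschitz_on_bounded f ->
  lipschitz_on_bounded g -> lipschitz_on_bounded (fun w => f w * g w).
Proof.
move=> Hf Hg r; have [L1 [M1 [L10 M10 H1]]] := Hf r.
have [L2 [M2 [L20 M20 H2]]] := Hg r.
exists (M1 * L2 + M2 * L1), (M1 * M2); split; rewrite ?addr_ge0 ?mulr_ge0 //.
move=> w e rw re; have [fw fwe] := H1 w e rw re; have [gw gwe] := H2 w e rw re.
have [ge _] := H2 e e re re.
split; first by rewrite modCM ler_pM ?modC_ge0.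
have -> : f w * g w - f e * g e = f w * (g w - g e) + (f w - f e) * g e by ring.
apply: le_trans (ler_modCD _ _) _; rewrite !modCM.
have -> : (M1 * L2 + M2 * L1) * distC w e =
    M1 * (L2 * distC w e) + (L1 * distC w e) * M2 by ring.
by apply: lerD; apply: ler_pM; rewrite ?modC_ge0.
Qed.

Lemma lipschitz_on_bounded_sum {I : Type} (s : seq I) (F : I -> Cn R n -> C) :
  (forall i, lipschitz_on_bounded (F i)) ->
  lipschitz_on_bounded (fun w => \sum_(i <- s) F i w).
Proof.
move=> HF; elim: s => [|i s IH].
  apply: eq_lipschitz_on_bounded (lipschitz_on_bounded_cst 0) _.
  by move=> w; rewrite big_nil.
apply: eq_lipschitz_on_bounded (lipschitz_on_boundedD (HF i) IH) _.
by move=> w; rewrite big_cons.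
Qed.

Lemma lipschitz_on_bounded_prod {I : Type} (s : seq I) (F : I -> Cn R n -> C) :
  (forall i, lipschitz_on_bounded (F i)) ->
  lipschitz_on_bounded (fun w => \prod_(i <- s) F i w).
Proof.
move=> HF; elim: s => [|i s IH].
  apply: eq_lipschitz_on_bounded (lipschitz_on_bounded_cst 1) _.
  by move=> w; rewrite big_nil.
apply: eq_lipschitz_on_bounded (lipschitz_on_boundedM (HF i) IH) _.
by move=> w; rewrite big_cons.
Qed.

Lemma lipschitz_on_boundedX {f} k :
  lipschitz_on_bounded f -> lipschitz_on_bounded (fun w => f w ^+ k).
Proof.
move=> Hf; elim: k => [|k IH].
  apply: eq_lipschitz_on_bounded (lipschitz_on_bounded_cst 1) _.
  by move=> w; rewrite expr0.
apply: eq_lipschitz_on_bounded (lipschitz_on_boundedM Hf IH) _.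
by move=> w; rewrite exprS.
Qed.

Lemma lipschitz_on_bounded_poly_eval (p : Defs.polyC R n) :
  lipschitz_on_bounded (poly_eval p).
Proof.
have Hp : lipschitz_on_bounded (fun w => \sum_(m <- mpoly.msupp p)
    mpoly.mcoeff m p * \prod_(i < n) coordC w i ^+ mpoly.fun_of_multinom m i).
  apply: lipschitz_on_bounded_sum => m.
  apply: lipschitz_on_boundedM; first exact: lipschitz_on_bounded_cst.
  apply: lipschitz_on_bounded_prod => i.
  exact/lipschitz_on_boundedX/lipschitz_on_bounded_coordC.
by apply: eq_lipschitz_on_bounded Hp _ => w; rewrite /poly_eval mpoly.mevalE.
Qed.

End PolynomialLipschitz.

Section SuperlevelSetsOpen.
Context {R : realType} {n : nat}.
Implicit Types (w e : Cn R n) (E : set (Cn R n)) (p : Defs.polyC R n).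

Lemma coord_bounded_near {B : R} {w e} :
  (forall j, `|e.1 ord0 j| <= B /\ `|e.2 ord0 j| <= B) -> distC w e <= 1 ->
  coord_bounded (B + B + 1) e /\ coord_bounded (B + B + 1) w.
Proof.
move=> eB we; have eBB j : modC (coordC e j) <= B + B.
  by have [e1 e2] := eB j; exact: le_trans (modC_Complex_le _ _) (lerD e1 e2).
split=> j; first by rewrite ler_wpDr ?eBB.
have -> : coordC w j = coordC e j + (coordC w j - coordC e j) by rewrite addrC subrK.
exact: le_trans (ler_modCD _ _) (lerD (eBB j) (le_trans (modC_coordCB_le _ _ _) we)).
Qed.

Lemma poly_eval_le_near {E p} {M : R} : compact E -> 1 < M -> sup_norm_le1 p E ->
  exists2 δ : R, 0 < δ & forall w e, E e -> distC w e < δ ->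
    modC (poly_eval p w) <= M.
Proof.
move=> cE M1 pE; have [B [_ EB]] := compact_coord_bounded cE.
have [L [Mp [L0 _ pL]]] := lipschitz_on_bounded_poly_eval p (B + B + 1).
pose t := (M - 1) / (L + 1).
have L1 : 0 < L + 1 by rewrite ltr_wpDl.
have t0 : 0 < t by rewrite divr_gt0 ?subr_gt0.
have tL : t * (L + 1) = M - 1 by rewrite divfK ?gt_eqF.
exists (Num.min 1 t); first by rewrite lt_min ltr01 t0.
move=> w e Ee; rewrite lt_min => /andP[/ltW we1 /ltW wet].
have [be bw] := coord_bounded_near (EB e Ee) we1.
have [_ pwe] := pL w e bw be.
rewrite -(subrK (poly_eval p e) (poly_eval p w)).
apply: le_trans (ler_modCD _ _) _.
have := pE e Ee; have := ler_wpM2l L0 wet; have := distC_ge0 w e; nra.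
Qed.

Lemma dist_pt_set_le {z a : Cn R n} {E} : E a -> dist_pt_set z E <= distC z a.
Proof.
move=> Ea; apply: ge_inf; last by exists a.
by exists 0 => _ [b _ <-]; exact: distC_ge0.
Qed.

Lemma distC_le_coord_bound (M : R) (a b : Cn R n) :
  (forall j, `|a.1 ord0 j| <= M /\ `|a.2 ord0 j| <= M) ->
  (forall j, `|b.1 ord0 j| <= M /\ `|b.2 ord0 j| <= M) ->
  distC a b <= Num.sqrt ((M + M) ^+ 2 *+ 2 *+ n).
Proof.
move=> aM bM; rewrite ler_sqrt ?mulrn_wge0 ?sqr_ge0 //.
apply: le_trans (_ : _ <= \sum_(j < n) (M + M) ^+ 2 *+ 2) _; last first.
  by rewrite sumr_const card_ord.
have sqrB_le x y : `|x| <= M -> `|y| <= M -> (x - y) ^+ 2 <= (M + M) ^+ 2.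
  by rewrite !ler_norml => /andP[? ?] /andP[? ?]; nra.
apply: ler_sum => j _; have [a1 a2] := aM j; have [b1 b2] := bM j.
by rewrite mulr2n lerD ?sqrB_le.
Qed.

Lemma dist_pt_set_le_hausdorff (A : ncompact R n) {B : ncompact R n} {b} :
  proj1_sig B b -> dist_pt_set b (proj1_sig A) <= hausdorff A B.
Proof.
rewrite /hausdorff le_max => Bb; apply/orP; right.
case: A B Bb => [A [[a0 Aa0] cA]] [B [_ cB]] /= Bb.
apply: ub_le_sup; last by exists b.
have [M [_ ABM]] := compact_coord_bounded (compactU cA cB).
exists (Num.sqrt ((M + M) ^+ 2 *+ 2 *+ n)) => _ [b' Bb' <-].
apply: le_trans (dist_pt_set_le Aa0) _.
by apply: distC_le_coord_bound; apply: ABM; [right | left].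
Qed.

Lemma hausdorff_lt_near {A B : ncompact R n} {δ : R} {w} :
  hausdorff A B < δ -> proj1_sig B w -> exists2 e, proj1_sig A e & distC w e < δ.
Proof.
move=> ABδ Bw; have := le_lt_trans (dist_pt_set_le_hausdorff A Bw) ABδ.
case: A {ABδ} => A [[a0 Aa0] _] /= wA.
have Aw0 : [set distC w a | a in A] !=set0 by exists (distC w a0), a0.
by have [_ [e Ae <-] ?] := inf_lt Aw0 wA; exists e.
Qed.

Lemma poly_deg_scale {c : complex R} p : c != 0 -> poly_deg (c *: p) = poly_deg p.
Proof. by move=> c0; exact: perm_big (mpoly.msuppZ p c0). Qed.

Lemma modC_poly_eval_scale {a : R} p w : 0 <= a ->
  modC (poly_eval ((a%:C)%C *: p) w) = a * modC (poly_eval p w).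
Proof. by move=> a0; rewrite /poly_eval mpoly.mevalZ modCM modC_realC ger0_norm. Qed.

Lemma exists_scale01_lt {a c : R} : 0 <= c -> a < c ->
  exists mu : R, [/\ 0 < mu, mu < 1 & a < mu * c].
Proof.
move=> c0 ac; have [a0|a0] := leP a 0; first by exists (1 / 2); split; lra.
have c0' : 0 < c by lra.
have ac1 : a / c < 1 by rewrite ltr_pdivrMr // mul1r.
have ac0 : 0 < a / c by rewrite divr_gt0.
have acc : a / c * c = a by rewrite divfK // gt_eqF.
by exists ((1 + a / c) / 2); split; [lra | lra | nra].
Qed.

Lemma hausdorff_open_siciak_gt (z : Cn R n) (a : R) :
  hausdorff_open [set E : ncompact R n | (a%:E < siciak (proj1_sig E) z)%E].
Proof.
move=> E /= /ereal_sup_gt[_ [p [dp Ep] <-]]; rewrite lte_fin.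
set d := poly_deg p in dp *; set c := modC (poly_eval p z) `^ _ => ac.
have [mu [mu0 mu1 amu]] := exists_scale01_lt (powR_ge0 _ _) ac.
pose lam := mu ^+ d.
have lam0 : 0 < lam by rewrite exprn_gt0.
have lam_ge0 := ltW lam0.
have lam1 : 1 < lam^-1 by rewrite invf_gt1 // exprn_ilt1 ?ltW // -lt0n.
have lamC0 : (lam%:C)%C != 0 by rewrite eq_complex /= negb_and gt_eqF.
have [δ δ0 Eδ] := poly_eval_le_near (proj2 (proj2_sig E)) lam1 Ep.
exists δ => // F EF; apply: lt_le_trans (ereal_sup_ubound _); last first.
  exists ((lam%:C)%C *: p); last reflexivity.
  split => [|w Fw]; first by rewrite poly_deg_scale.
  have [e Ee we] := hausdorff_lt_near EF Fw.
  rewrite modC_poly_eval_scale // -(mulfV (lt0r_neq0 lam0)) ler_pM2l //.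
  exact: Eδ we.
(* lam = mu^d was chosen so that lam^(1/d) = mu. *)
rewrite lte_fin (poly_deg_scale p lamC0) (modC_poly_eval_scale p z lam_ge0).
rewrite (powRM _ lam_ge0 (modC_ge0 _)) -/d -/c /lam -powR_mulrn ?(ltW mu0) //.
by rewrite -powRrM mulfV ?pnatr_eq0 -?lt0n // powRr1 ?(ltW mu0).
Qed.

Lemma EFin_lt_lne (a : R) (y : \bar R) : (a%:E < lne y)%E = ((expR a)%:E < y)%E.
Proof.
case: y => [r| |] //=; last by rewrite !ltey.
case: ifPn => [r0|]; last by rewrite -ltNge => r0; rewrite !lte_fin -ltr_expR lnK.
by apply/esym/negbTE; rewrite -leNgt lee_fin (le_trans r0) // ltW // expR_gt0.
Qed.

Lemma hausdorff_open_green_gt (z : Cn R n) (a : R) :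
  hausdorff_open [set E : ncompact R n | (a%:E < green (proj1_sig E) z)%E].
Proof.
have := hausdorff_open_siciak_gt z (expR a).
by congr hausdorff_open; apply/seteqP; split => E /=; rewrite /green EFin_lt_lne.
Qed.

End SuperlevelSetsOpen.

Lemma measurable_lsc_random_compact {d : measure_display} {Omega : measurableType d}
    {R : realType} {n : nat} {K : Omega -> ncompact R n}
    {G : ncompact R n -> \bar R} :
  random_compact K -> (forall a : R, hausdorff_open [set E | (a%:E < G E)%E]) ->
  measurable_fun setT (G \o K).
Proof.
move=> HK HG; apply: (measurability (@ErealGenOInfty.G R)).
  exact: ErealGenOInfty.measurableE.
move=> _ [_ [r ->] <-]; rewrite setTI.
have -> : (G \o K) @^-1` `]r%:E, +oo[%classic = K @^-1` [set E | (r%:E < G E)%E].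
  by apply/seteqP; split => x /=; rewrite in_itv /= andbT.
by apply: HK; apply: sub_sigma_algebra; exact: HG.
Qed.

Theorem theorem6p20 (d : measure_display) (Omega : measurableType d)
  (R : realType) (n : nat) (K : Omega -> ncompact R n) :
  random_compact K ->
  forall z : Cn R n,
    measurable_fun setT (fun w : Omega => siciak (proj1_sig (K w)) z) /\
    measurable_fun setT (fun w : Omega => green (proj1_sig (K w)) z).
Proof.
move=> HK z; split.
- exact: (measurable_lsc_random_compact HK (hausdorff_open_siciak_gt z)).
- exact: (measurable_lsc_random_compact HK (hausdorff_open_green_gt z)).
Qed.
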